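(* Let $\Omega\subset\mathbb{R}^3$ be a bounded domain with $C^2$ boundary satisfying the uniform circumscribed sphere condition with radius $R$. Then $$d_x^{1/2}\le R^{1/2}N(x,v)$$ for all $x\in\bar\Omega$ and $v\in\mathbb{R}^3\setminus\{0\}$, where $d_x$ is the distance from $x$ to $\partial\Omega$.
   Context: $n$ is the outward unit normal on $\partial\Omega$; $\tau_{x,v}=\inf\{s\ge0:x-sv\in\Omega^c\}$, $q(x,v)=x-\tau_{x,v}v$, $N(x,v)=-n(q(x,v))\cdot\frac{v}{|v|}$. Uniform circumscribed sphere condition with radius $R$: every $x\in\partial\Omega$ lies on $\partial B_R$ for some ball $B_R$ of radius $R$ with $\bar\Omega\subset\bar B_R$. *)

(* R : realType, points of R^3 are row vectors 'rV[R]_3.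
   The library norm on 'rV is the max norm, so the Euclidean norm, inner product,
   Euclidean balls and distances are defined explicitly below. *)
From HB Require Import structures.
From mathcomp Require Import all_boot all_order all_algebra.
From mathcomp Require Import all_classical all_reals all_analysis.
Set Implicit Arguments. Unset Strict Implicit. Unset Printing Implicit Defensive.
Import Order.TTheory GRing.Theory Num.Theory.
Import numFieldNormedType.Exports.
Local Open Scope classical_set_scope.
Local Open Scope ring_scope.

Section Defs.
Variable R : realType.
Local Notation V := 'rV[R]_3.

Definition dotp (u v : V) : R := \sum_(i < 3) u 0 i * v 0 i.
Definition enorm (u : V) : R := Num.sqrt (dotp u u).

Definition eball (p : V) (r : R) : set V := [set y | enorm (y - p) < r].

Definition ebasis (i : 'I_3) : V := delta_mx 0 i.

Definition partial (i : 'I_3) (f : V -> R) : V -> R := fun x => 'D_(ebasis i) f x.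

Definition C2_on (U : set V) (f : V -> R) : Prop :=
  open U /\
  {in U, continuous f} /\
  (forall i : 'I_3, forall x, U x -> derivable f x (ebasis i)) /\
  (forall i : 'I_3, {in U, continuous (partial i f)}) /\
  (forall i j : 'I_3, forall x, U x -> derivable (partial i f) x (ebasis j)) /\
  (forall i j : 'I_3, {in U, continuous (partial j (partial i f))}).

Definition grad (f : V -> R) (x : V) : V := \row_(i < 3) partial i f x.

Definition bdry (O : set V) : set V := closure O `\` interior O.

Definition local_defining_fun (O : set V) (p : V) (r : R) (rho : V -> R) : Prop :=
  0 < r /\ C2_on (eball p r) rho /\
  (forall y, eball p r y -> (O y <-> rho y < 0)) /\
  grad rho p != 0.

Definition C2_boundary (O : set V) : Prop :=
  forall p, bdry O p -> exists r (rho : V -> R), local_defining_fun O p r rho.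

Definition outward_unit_normal (O : set V) (n : V -> V) : Prop :=
  forall p, bdry O p -> exists r (rho : V -> R),
    local_defining_fun O p r rho /\ n p = (enorm (grad rho p))^-1 *: grad rho p.

Definition bounded_domain (O : set V) : Prop :=
  O !=set0 /\ open O /\ connected O /\ exists M : R, forall x, O x -> enorm x <= M.

Definition unif_circumscribed_sphere (O : set V) (Rad : R) : Prop :=
  forall x, bdry O x -> exists c : V,
    enorm (x - c) = Rad /\ (forall y, closure O y -> enorm (y - c) <= Rad).

Definition tau (O : set V) (x v : V) : R :=
  inf [set s : R | 0 < s /\ ~ O (x - s *: v)].

Definition qpt (O : set V) (x v : V) : V := x - tau O x v *: v.

Definition Nfun (O : set V) (n : V -> V) (x v : V) : R :=
  - dotp (n (qpt O x v)) ((enorm v)^-1 *: v).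

Definition dist_bdry (O : set V) (x : V) : R :=
  inf [set d : R | exists y, bdry O y /\ d = enorm (x - y)].

End Defs.

From HB Require Import structures.
From mathcomp Require Import all_boot all_order all_algebra.
From mathcomp Require Import all_classical all_reals all_analysis.
From mathcomp Require Import ring lra.
Import Order.TTheory GRing.Theory Num.Theory.
Import numFieldNormedType.Exports.
Local Open Scope classical_set_scope.
Local Open Scope ring_scope.

(* Let q = x - tau v be the backward exit point, c the centre of a circumscribed
   ball touching the boundary at q, and rho a defining function of Omega near q.
   A first-order Taylor expansion shows that q + s w enters Omega for small s > 0
   whenever grad rho(q).w < 0; as the closure of Omega lies in the ball, no
   direction leaving the ball can do so, hence grad rho(q) is a positive multiple
   of q - c and n(q) = (q - c)/R.  Thus N = -cos theta, theta the angle between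
   q - c and v, and N >= 0: for tau > 0 because x - c = (q - c) + tau v is in the
   ball, for tau = 0 by the same descent argument in the direction -v.  The line
   through q with direction v stays at distance R sin theta >= R (1 - N^2) from c,
   so |x - c| >= R (1 - N^2), whereas the ray from c through x leaves Omega within
   distance R - |x - c| of x, giving d_x <= R - |x - c| <= R N^2. *)

Section Euclidean.
Context {R : realType}.
Local Notation V := 'rV[R]_3.
Implicit Types (u v w : V) (s : R).

Lemma dotpC u v : dotp u v = dotp v u.
Proof. by apply: eq_bigr => i _; rewrite mulrC. Qed.

Lemma dotpDl u v w : dotp (u + v) w = dotp u w + dotp v w.
Proof. by rewrite /dotp -big_split; apply: eq_bigr => i _; rewrite mxE mulrDl. Qed.

Lemma dotpZl s u v : dotp (s *: u) v = s * dotp u v.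
Proof. by rewrite /dotp mulr_sumr; apply: eq_bigr => i _; rewrite mxE mulrA. Qed.

Lemma dotpBl u v w : dotp (u - v) w = dotp u w - dotp v w.
Proof. by rewrite dotpDl -scaleN1r dotpZl mulN1r. Qed.

Lemma dotpDr u v w : dotp u (v + w) = dotp u v + dotp u w.
Proof. by rewrite dotpC dotpDl !(dotpC u). Qed.

Lemma dotpZr s u v : dotp u (s *: v) = s * dotp u v.
Proof. by rewrite dotpC dotpZl dotpC. Qed.

Lemma dotpBr u v w : dotp u (v - w) = dotp u v - dotp u w.
Proof. by rewrite dotpC dotpBl !(dotpC u). Qed.

Lemma dotpNr u v : dotp u (- v) = - dotp u v.
Proof. by rewrite -scaleN1r dotpZr mulN1r. Qed.

Lemma dotpp_ge0 u : 0 <= dotp u u.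
Proof. by apply: sumr_ge0 => i _; rewrite -expr2 sqr_ge0. Qed.

Lemma dotpp_eq0 u : (dotp u u == 0) = (u == 0).
Proof.
apply/idP/eqP => [|->]; last by rewrite /dotp big1 // => i _; rewrite mxE mul0r.
rewrite psumr_eq0 => [/allP u0|i _]; last by rewrite -expr2 sqr_ge0.
apply/rowP => i; have /u0 : i \in index_enum 'I_3 by rewrite mem_index_enum.
by rewrite /= -expr2 sqrf_eq0 mxE => /eqP.
Qed.

Lemma enorm_ge0 u : 0 <= enorm u.
Proof. exact: sqrtr_ge0. Qed.

Lemma enorm_sqr u : enorm u ^+ 2 = dotp u u.
Proof. by rewrite sqr_sqrtr // dotpp_ge0. Qed.

Lemma enorm_eq0 u : (enorm u == 0) = (u == 0).
Proof. by rewrite -sqrf_eq0 enorm_sqr dotpp_eq0. Qed.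

Lemma enorm0 : enorm (0 : V) = 0.
Proof. by apply/eqP; rewrite enorm_eq0. Qed.

Lemma enorm_gt0 u : (0 < enorm u) = (u != 0).
Proof. by rewrite lt_def enorm_eq0 enorm_ge0 andbT. Qed.

Lemma enormZ s u : enorm (s *: u) = `|s| * enorm u.
Proof. by rewrite /enorm dotpZl dotpZr mulrA sqrtrM ?sqr_ge0 // sqrtr_sqr. Qed.

Lemma enormN u : enorm (- u) = enorm u.
Proof. by rewrite -scaleN1r enormZ normrN1 mul1r. Qed.

Lemma enorm_coord u i : `|u 0 i| <= enorm u.
Proof.
rewrite -sqrtr_sqr ler_sqrt ?dotpp_ge0 // /dotp (bigD1 i) //= -expr2 lerDl.
by apply: sumr_ge0 => j _; rewrite -expr2 sqr_ge0.
Qed.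

Lemma enormDZ_sqr u w s :
  enorm (u + s *: w) ^+ 2 = enorm u ^+ 2 + 2 * s * dotp u w + s ^+ 2 * enorm w ^+ 2.
Proof. rewrite !enorm_sqr !dotpDl !dotpDr !dotpZl !dotpZr (dotpC w u); ring. Qed.

Lemma enorm_ebasis i : enorm (ebasis R i) = 1.
Proof.
rewrite /enorm /dotp (bigD1 i) //= big1 /ebasis => [|j /negPf ji].
  by rewrite !mxE !eqxx mulr1 addr0 sqrtr1.
by rewrite !mxE ji mulr0.
Qed.

Lemma enorm_polar u : exists2 w, enorm w = 1 & u = enorm u *: w.
Proof.
have [->|u0] := eqVneq u 0.
  by exists (ebasis R 0); rewrite ?enorm_ebasis // enorm0 scale0r.
have nu0 : enorm u != 0 by rewrite enorm_eq0.
exists ((enorm u)^-1 *: u); last by rewrite scalerA mulfV // scale1r.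
by rewrite enormZ ger0_norm ?invr_ge0 ?enorm_ge0 // mulVf.
Qed.

Definition cos_angle u v : R := dotp u v / (enorm u * enorm v).

(* The distance from 0 to the line {u + t v | t real} is |u| sin theta >= |u| sin^2 theta. *)
Lemma enorm_line_lb u v s : v != 0 ->
  enorm u * (1 - cos_angle u v ^+ 2) <= enorm (u + s *: v).
Proof.
move=> v0; set A := enorm u; set m := enorm v; set C := cos_angle u v.
have m_gt0 : 0 < m by rewrite enorm_gt0.
have [A0|A_gt0] := eqVneq A 0; first by rewrite A0 mul0r enorm_ge0.
have uvC : dotp u v = C * A * m.
  by rewrite /C /cos_angle -/A -/m -mulrA divfK // mulf_neq0 // gt_eqF.
have E : enorm (u + s *: v) ^+ 2 = (s * m + C * A) ^+ 2 + A ^+ 2 * (1 - C ^+ 2).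
  by rewrite enormDZ_sqr uvC -/A -/m; ring.
have A_ge0 : 0 <= A := enorm_ge0 u.
have e_ge0 := enorm_ge0 (u + s *: v).
move: E e_ge0; set e := enorm (u + s *: v); set D := 1 - C ^+ 2 => E e_ge0.
have [D_le0|D_gt0] := lerP D 0; first by apply: le_trans e_ge0; rewrite mulr_ge0_le0.
have D_le1 : D <= 1 by rewrite /D lerBlDr lerDl sqr_ge0.
have sq : (A * D) ^+ 2 <= e ^+ 2.
  rewrite E exprMn; apply: (@le_trans _ _ (A ^+ 2 * D)); last by rewrite lerDr sqr_ge0.
  by rewrite ler_wpM2l ?sqr_ge0 // expr2 ger_pMl.
by rewrite -(@ler_pXn2r _ 2) // nnegrE mulr_ge0 // ltW.
Qed.

End Euclidean.

Lemma MVT_origin {R : realType} (g dg : R -> R) (b : R) :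
  (forall t, `|t| <= `|b| -> is_derive t (1 : R) g (dg t)) ->
  exists2 c, `|c| <= `|b| & g b - g 0 = dg c * b.
Proof.
move=> gd.
have MVT_between a a' : a <= a' -> `|a| <= `|b| -> `|a'| <= `|b| ->
    exists2 c, `|c| <= `|b| & g a' - g a = dg c * (a' - a).
  move=> aa' /ler_normlP[ab1 ab2] /ler_normlP[a'b1 a'b2].
  have in_b t : a <= t <= a' -> `|t| <= `|b|.
    by move=> /andP[lo hi]; rewrite ler_norml; apply/andP; split; lra.
  have [||c /[!in_itv] /= /in_b cb E] := @MVT_segment R g dg a a' aa'.
  - by move=> t /[!in_itv] /= /andP[lo hi]; apply/gd/in_b; rewrite !ltW.
  - by apply: derivable_within_continuous => t /[!in_itv] /= /in_b /gd [].
  by exists c.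
have [b_ge0|b_lt0] := leP 0 b.
  have [||c cb E] := MVT_between 0 b b_ge0; rewrite ?normr0 //.
  by exists c; rewrite // E subr0.
have [||c cb E] := MVT_between b 0 (ltW b_lt0); rewrite ?normr0 //.
by exists c; rewrite // -opprB E add0r mulrN opprK.
Qed.

Section Lines.
Context {R : realType} {W : normedModType R}.

Lemma near_ray {p : W} (w : W) {A : set W} : nbhs p A -> \forall s \near (0 : R), A (p + s *: w).
Proof.
move=> pA; have : (fun s : R => p + s *: w) @ 0 --> p + 0 *: w.
  by apply: cvgD; [exact: cvg_cst | apply: cvgZl].
by rewrite scale0r addr0; apply.
Qed.

Variable f : W -> R.

Lemma is_derive_line (y e : W) (t : R) :
  derivable f (y + t *: e) e ->
  is_derive t 1 (fun s => f (y + s *: e)) ('D_e f (y + t *: e)).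
Proof.
move=> df.
have quotE : (fun h : R => h^-1 *: (f (y + (h *: 1 + t) *: e) - f (y + t *: e))) =
             (fun h : R => h^-1 *: (f (h *: e + (y + t *: e)) - f (y + t *: e))).
  apply: funext => h; congr (_ *: (f _ - _)).
  by rewrite [h *: 1]mulr1 scalerDl addrCA addrA.
apply: DeriveDef; first by rewrite /derivable quotE.
by rewrite /derive quotE.
Qed.

Lemma line_increment {p y e : W} {b δ ε : R} :
  `|y - p| + `|b| * `|e| < δ ->
  (forall z, `|z - p| < δ -> derivable f z e /\ `|'D_e f z - 'D_e f p| <= ε) ->
  `|f (y + b *: e) - f y - b * 'D_e f p| <= `|b| * ε.
Proof.
move=> yb_lt dfp.
have near_p t : `|t| <= `|b| -> `|y + t *: e - p| < δ.
  move=> tb; apply: le_lt_trans yb_lt; rewrite addrAC; apply: le_trans (ler_normD _ _) _.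
  by rewrite lerD2l normrZ ler_wpM2r.
have [|c cb E] := @MVT_origin R (fun t => f (y + t *: e)) (fun t => 'D_e f (y + t *: e)) b.
  by move=> t /near_p /dfp [/is_derive_line].
move: E => /=; rewrite scale0r addr0 => ->.
rewrite [b * _]mulrC -mulrBl normrM mulrC ler_wpM2l //.
by have [_] := dfp _ (near_p c cb).
Qed.

End Lines.

Definition i0 : 'I_3 := @Ordinal 3 0 isT.
Definition i1 : 'I_3 := @Ordinal 3 1 isT.
Definition i2 : 'I_3 := @Ordinal 3 2 isT.

Lemma sum3 (M : nmodType) (F : 'I_3 -> M) : \sum_i F i = F i0 + F i1 + F i2.
Proof. by rewrite !big_ord_recl big_ord0 addr0 addrA; congr (F _ + F _ + F _); apply/val_inj. Qed.

Section Coordinates.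
Context {R : realType}.
Local Notation V := 'rV[R]_3.

Lemma row3E (w : V) :
  w = w 0 i0 *: ebasis R i0 + w 0 i1 *: ebasis R i1 + w 0 i2 *: ebasis R i2.
Proof. by rewrite {1}(row_sum_delta w) sum3. Qed.

Lemma normr_ebasis i : `|ebasis R i| = 1.
Proof.
rewrite [LHS]mx_normrE /ebasis; apply/le_anti/andP; split.
  by apply: bigmax_le => // -[a b] _; rewrite mxE /=; case: (_ && _); rewrite ?normr1 ?normr0.
by apply: le_trans (le_bigmax _ _ (0, i)); rewrite /= mxE !eqxx normr1.
Qed.

Lemma dotp_grad (f : V -> R) p w : dotp (grad f p) w =
  w 0 i0 * 'D_(ebasis R i0) f p + w 0 i1 * 'D_(ebasis R i1) f p + w 0 i2 * 'D_(ebasis R i2) f p.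
Proof. by rewrite /dotp sum3 /grad !mxE /partial !(mulrC (w 0 _)). Qed.

End Coordinates.

Section FirstOrderTaylor.
Context {R : realType}.
Variables (f : 'rV[R]_3 -> R) (p : 'rV[R]_3).
Hypothesis f_derivable : \forall z \near p, forall i, derivable f z (ebasis R i).
Hypothesis partial_cont : forall i, {for p, continuous (partial i f)}.

Lemma partials_near {ε} : 0 < ε -> exists2 δ, 0 < δ & forall z i, `|z - p| < δ ->
  derivable f z (ebasis R i) /\ `|'D_(ebasis R i) f z - 'D_(ebasis R i) f p| <= ε.
Proof.
move=> ε_gt0.
have cont i : \forall z \near p, `|partial i f p - partial i f z| <= ε.
  by move/cvgrPdist_le: (partial_cont i); apply.
have : \forall z \near p, (forall i, derivable f z (ebasis R i)) /\
    forall i, `|partial i f p - partial i f z| <= ε.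
  by near=> z; split; near: z; [exact: f_derivable | exact: filter_forall].
move=> /nbhs_normP[δ /= δ_gt0 pδ]; exists δ => // z i zp.
have /pδ[/(_ i) ? /(_ i)] : `|p - z| < δ by rewrite distrC.
by rewrite distrC.
Unshelve. all: by end_near.
Qed.

Lemma grad_increment_le {δ ε s : R} (w : 'rV[R]_3) : 0 < s ->
  (forall z i, `|z - p| < δ ->
     derivable f z (ebasis R i) /\ `|'D_(ebasis R i) f z - 'D_(ebasis R i) f p| <= ε) ->
  s * (`|w 0 i0| + `|w 0 i1| + `|w 0 i2|) < δ ->
  `|f (p + s *: w) - f p - s * dotp (grad f p) w|
    <= s * (`|w 0 i0| + `|w 0 i1| + `|w 0 i2|) * ε.
Proof.
move=> s_gt0 dfp; set W := `|w 0 i0| + _ + _ => sW.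
pose b i := s * w 0 i.
have sWE : s * W = `|b i0| + `|b i1| + `|b i2|.
  by rewrite /W /b !normrM gtr0_norm //; ring.
set p1 := p + b i0 *: ebasis R i0; set p2 := p1 + b i1 *: ebasis R i1.
have -> : p + s *: w = p2 + b i2 *: ebasis R i2.
  by rewrite {1}(row3E w) !scalerDr !scalerA !addrA.
have inc y i : `|y - p| + `|b i| < δ ->
    `|f (y + b i *: ebasis R i) - f y - b i * 'D_(ebasis R i) f p| <= `|b i| * ε.
  move=> ypδ; apply: (line_increment f _ (fun z zp => dfp z i zp)).
  by rewrite normr_ebasis mulr1.
have p1p : `|p1 - p| = `|b i0| by rewrite /p1 addrC addKr normrZ normr_ebasis mulr1.
have p2p : `|p2 - p| <= `|b i0| + `|b i1|.
  by rewrite /p2 addrAC -p1p (le_trans (ler_normD _ _)) // normrZ normr_ebasis mulr1.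
have lt2 : `|b i0| + `|b i1| + `|b i2| < δ by rewrite -sWE.
have lt1 : `|b i0| + `|b i1| < δ by apply: le_lt_trans lt2; rewrite lerDl.
have p0δ : `|p - p| + `|b i0| < δ.
  by rewrite subrr normr0 add0r; apply: le_lt_trans lt1; rewrite lerDl.
have p1δ : `|p1 - p| + `|b i1| < δ by rewrite p1p.
have p2δ : `|p2 - p| + `|b i2| < δ := le_lt_trans (lerD p2p (lexx _)) lt2.
have inc0 := inc _ _ p0δ; have inc1 := inc _ _ p1δ; have inc2 := inc _ _ p2δ.
rewrite dotp_grad.
pose D i := 'D_(ebasis R i) f p; rewrite -/(D i0) -/(D i1) -/(D i2) in inc0 inc1 inc2 *.
set f3 := f (p2 + _); set f2 := f p2; set f1 := f p1; set f0 := f p in inc0 inc1 inc2 *.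
have -> : f3 - f0 - s * (w 0 i0 * D i0 + w 0 i1 * D i1 + w 0 i2 * D i2)
    = (f1 - f0 - b i0 * D i0) + (f2 - f1 - b i1 * D i1) + (f3 - f2 - b i2 * D i2).
  by rewrite /b; clearbody D f0 f1 f2 f3; ring.
apply: le_trans (ler_normD _ _) _; apply: le_trans (lerD (ler_normD _ _) (lexx _)) _.
by apply: le_trans (lerD (lerD inc0 inc1) inc2) _; rewrite -!mulrDl -sWE.
Qed.

Lemma grad_taylor1 w ε : 0 < ε ->
  \forall s \near 0^'+, `|f (p + s *: w) - f p - s * dotp (grad f p) w| <= s * ε.
Proof.
move=> ε_gt0; set W := `|w 0 i0| + `|w 0 i1| + `|w 0 i2|.
have W1_gt0 : 0 < W + 1 by rewrite ltr_wpDl ?addr_ge0.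
have [δ δ_gt0 dfp] := partials_near (divr_gt0 ε_gt0 W1_gt0).
near=> s.
have s_gt0 : 0 < s by near: s; exact: nbhs_right_gt.
have sW1 : s * (W + 1) < δ.
  by rewrite -ltr_pdivlMr //; near: s; apply: nbhs_right_lt; rewrite divr_gt0.
apply: le_trans (grad_increment_le w s_gt0 dfp _) _.
  by apply: le_lt_trans sW1; apply: ler_wpM2l; [exact: ltW | rewrite /W lerDl].
rewrite -mulrA; apply: ler_wpM2l; first exact: ltW.
by rewrite mulrA ler_pdivrMr // mulrDr mulr1 mulrC lerDl ltW.
Unshelve. all: by end_near.
Qed.

Lemma grad_descent w : dotp (grad f p) w < 0 -> \forall s \near 0^'+, f (p + s *: w) < f p.
Proof.
set G := dotp (grad f p) w => G_lt0.
near=> s.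
have s_gt0 : 0 < s by near: s; exact: nbhs_right_gt.
have /ler_normlP[_] : `|f (p + s *: w) - f p - s * G| <= s * (- G / 2).
  by near: s; apply: grad_taylor1; lra.
have : s * G < 0 by rewrite pmulr_rlt0.
rewrite mulrA mulrN -mulNr; lra.
Unshelve. all: by end_near.
Qed.

End FirstOrderTaylor.

Section ExitTime.
Context {R : realType} {O : set 'rV[R]_3} {x v : 'rV[R]_3}.
Local Notation exits := [set s : R | 0 < s /\ ~ O (x - s *: v)].

Lemma exits_nonempty : (exists M, forall y, O y -> enorm y <= M) -> v != 0 -> exits !=set0.
Proof.
move=> [M OM] v0.
have [i vi0] : exists i, v 0 i != 0.
  apply/existsP; apply: contraNT v0 => /existsPn v_eq0; apply/eqP/rowP => i.
  by rewrite mxE; apply/eqP/negbNE/v_eq0.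
have vi_gt0 : 0 < `|v 0 i| by rewrite normr_gt0.
set s := (`|x 0 i| + `|M| + 1) / `|v 0 i|.
have s_gt0 : 0 < s by rewrite divr_gt0 // ltr_wpDl // addr_ge0.
exists s; split => // /OM far.
have := le_trans (enorm_coord (x - s *: v) i) far; rewrite !mxE.
have := ler_normB (x 0 i) (x 0 i - s * v 0 i).
rewrite subKr normrM gtr0_norm // divfK ?gt_eqF //.
have := ler_norm M; lra.
Qed.

Hypothesis exits_n0 : exits !=set0.

Lemma tau_ge0 : 0 <= tau O x v.
Proof. by apply: (lb_le_inf exits_n0) => s [/ltW]. Qed.

Lemma tau_le {s} : 0 < s -> ~ O (x - s *: v) -> tau O x v <= s.
Proof. by move=> s_gt0 Os; rewrite /tau; apply: ge_inf; [exists 0 => r [/ltW] | split]. Qed.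

Lemma tau_in {s} : 0 < s -> s < tau O x v -> O (x - s *: v).
Proof. by move=> s_gt0 st; apply/not_notP => /(tau_le s_gt0); rewrite leNgt st. Qed.

Lemma tau_gt0 : (\forall s \near 0^'+, O (x - s *: v)) -> 0 < tau O x v.
Proof.
rewrite near_withinE => /nbhs_normP[δ /= δ_gt0 Oδ].
apply: lt_le_trans δ_gt0 _; apply: (lb_le_inf exits_n0) => s [s_gt0 Os].
rewrite leNgt; apply/negP => sδ; apply: Os; apply: (Oδ _ _ s_gt0).
by rewrite /= sub0r normrN gtr0_norm.
Qed.

Hypothesis O_open : open O.

Lemma qpt_notin : ~ O (qpt O x v).
Proof.
set t := tau O x v => Oq.
have : nbhs (qpt O x v) O by move: O_open; rewrite openE; apply.
move=> /(near_ray (- v)) /nbhs_normP[δ /= δ_gt0 Oδ].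
have [s [s_gt0 Os] s_lt] : exists2 s, 0 < s /\ ~ O (x - s *: v) & s < t + δ.
  by apply: inf_lt exits_n0 _; rewrite ltrDl.
have ts : t <= s := tau_le s_gt0 Os.
apply: Os; have -> : x - s *: v = qpt O x v + (s - t) *: - v.
  by rewrite /qpt -/t scalerN scalerBl opprB addrA subrK.
apply: Oδ; rewrite /= sub0r normrN ger0_norm ?subr_ge0 //; lra.
Qed.

Lemma qpt_closure : closure O x -> closure O (qpt O x v).
Proof.
rewrite /qpt; set t := tau O x v; have [->|t_neq0] := eqVneq t 0.
  by rewrite scale0r subr0.
have t_gt0 : 0 < t by rewrite lt_def t_neq0 tau_ge0.
move=> _ B /(near_ray v) /nbhs_normP[δ /= δ_gt0 Bδ].
have m_gt0 : 0 < Order.min t δ by rewrite lt_min t_gt0.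
set h := Order.min t δ / 2.
have : h < Order.min t δ by rewrite /h; lra.
rewrite lt_min => /andP[ht hδ].
have h_gt0 : 0 < h by rewrite /h; lra.
exists (x - (t - h) *: v); split; first by apply: tau_in; lra.
have -> : x - (t - h) *: v = x - t *: v + h *: v by rewrite scalerBl opprB addrCA addrC.
by apply: Bδ; rewrite /= sub0r normrN gtr0_norm.
Qed.

Lemma qpt_bdry : closure O x -> bdry O (qpt O x v).
Proof.
move=> /qpt_closure qO; split => //.
by rewrite (_ : O° = O); [exact: qpt_notin | apply/interior_id].
Qed.

End ExitTime.

Lemma dotp_halfspace_ge0 {R : realType} {a g : 'rV[R]_3} : a != 0 ->
  (forall w, 0 < dotp a w -> 0 <= dotp g w) -> exists2 λ, 0 <= λ & g = λ *: a.
Proof.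
move=> a0 ga_ge0; have aa_gt0 : 0 < dotp a a by rewrite -enorm_sqr exprn_gt0 ?enorm_gt0.
have perp u : dotp a u = 0 -> dotp g u = 0.
  move=> au; apply/eqP; apply: contraT => gu0.
  have := ga_ge0 (a - ((dotp g a + 1) / dotp g u) *: u).
  by rewrite !dotpBr !dotpZr au mulr0 subr0 divfK // => /(_ aa_gt0); lra.
set λ := dotp g a / dotp a a; exists λ; first by rewrite divr_ge0 ?ga_ge0 ?ltW.
pose u := g - λ *: a; have au : dotp a u = 0.
  by rewrite dotpBr dotpZr (dotpC a g) divfK ?subrr ?gt_eqF.
apply/eqP; rewrite -subr_eq0 -/u -dotpp_eq0.
by rewrite {1}/u dotpBl dotpZl perp // au mulr0 subr0.
Qed.

Lemma dist_bdry_le_enorm {R : realType} {O : set 'rV[R]_3} x {y} :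
  bdry O y -> dist_bdry O x <= enorm (x - y).
Proof.
move=> Oy; apply: ge_inf; last by exists y.
by exists 0 => _ [z [_ ->]]; exact: enorm_ge0.
Qed.

Section CircumscribedBall.
Context {R : realType}.
Local Notation V := 'rV[R]_3.
Context {O : set V} {c : V} {Rad : R}.
Hypothesis O_open : open O.
Hypothesis O_in_ball : forall y, closure O y -> enorm (y - c) <= Rad.

Lemma radius_gt0 : O !=set0 -> 0 < Rad.
Proof.
move=> [y Oy]; set e := ebasis R 0.
move: O_open; rewrite openE => /(_ y Oy) /(near_ray e) /nbhs_normP[δ /= δ_gt0 Oδ].
have Oyδ : O (y + δ / 2 *: e) by apply: Oδ; rewrite /= sub0r normrN gtr0_norm; lra.
rewrite ltNge; apply/negP => Rad_le0.
have at_c z : O z -> z = c.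
  move=> /subset_closure /O_in_ball zc; apply/eqP; rewrite -subr_eq0 -enorm_eq0 eq_le.
  by rewrite enorm_ge0 (le_trans zc).
have : enorm (δ / 2 *: e) = 0.
  have -> : δ / 2 *: e = (y + δ / 2 *: e) - y by rewrite addrC addKr.
  by rewrite (at_c _ Oyδ) (at_c _ Oy) subrr enorm0.
by rewrite enormZ enorm_ebasis mulr1 gtr0_norm; lra.
Qed.

Lemma dist_bdry_le x : (exists M, forall y, O y -> enorm y <= M) -> closure O x ->
  dist_bdry O x <= Rad - enorm (x - c).
Proof.
move=> O_bdd xO; have [u u1 xcE] := enorm_polar (x - c); set e := enorm (x - c) in xcE.
have u0 : - u != 0 by rewrite oppr_eq0 -enorm_eq0 u1 oner_eq0.
have exits_n0 := exits_nonempty (x := x) O_bdd u0.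
have e_le : e <= Rad := O_in_ball _ xO.
have e_ge0 : 0 <= e := enorm_ge0 _.
have t_le : tau O x (- u) <= Rad - e.
  rewrite leNgt; apply/negP => t_gt.
  have Os : O (x - (Rad - e + tau O x (- u)) / 2 *: - u).
    by apply: tau_in; lra.
  have := O_in_ball _ (subset_closure Os).
  rewrite scalerN opprK addrAC xcE -scalerDl enormZ u1 mulr1 ger0_norm; lra.
apply: le_trans (dist_bdry_le_enorm x (qpt_bdry exits_n0 O_open xO)) _.
by rewrite /qpt subKr enormZ enormN u1 mulr1 ger0_norm // tau_ge0.
Qed.

Hypothesis O_n0 : O !=set0.
Context {q : V} {r : R} {ρ : V -> R}.
Hypothesis q_bdry : bdry O q.
Hypothesis qc : enorm (q - c) = Rad.
Hypothesis ρ_def : local_defining_fun O q r ρ.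

Let U_nbhs : nbhs q (eball q r).
Proof.
have [r_gt0 [[U_open _] _]] := ρ_def; move: U_open; rewrite openE; apply.
by rewrite /eball /= subrr enorm0.
Qed.

Lemma defining_fun_le0 : ρ q <= 0.
Proof.
have [_ [[_ [ρ_cont _]] [ρ_O _]]] := ρ_def.
rewrite leNgt; apply/negP => ρq_gt0.
have : \forall z \near q, eball q r z /\ 0 < ρ z.
  near=> z; split; near: z; first exact: U_nbhs.
  by apply: cvgr_gt ρq_gt0; apply: ρ_cont; rewrite inE; apply: nbhs_singleton U_nbhs.
move=> /q_bdry.1[z [Oz [Uz ρz_gt0]]].
by move: Oz => /(ρ_O z Uz); rewrite ltNge ltW.
Unshelve. all: by end_near.
Qed.

Lemma descent_into_domain w :
  dotp (grad ρ q) w < 0 -> \forall s \near 0^'+, O (q + s *: w).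
Proof.
have [_ [[_ [_ [ρ_der [ρ_pcont _]]]] [ρ_O _]]] := ρ_def.
have qU : q \in eball q r by rewrite inE; apply: nbhs_singleton U_nbhs.
move=> gw; have U_ray : \forall s \near 0^'+, eball q r (q + s *: w).
  by rewrite near_withinE; move: (near_ray w U_nbhs); apply: filterS => s ? _.
have ρ_desc : \forall s \near 0^'+, ρ (q + s *: w) < ρ q.
  apply: grad_descent gw => [|i]; last exact: ρ_pcont.
  by move: U_nbhs; apply: filterS => z Uz i; apply: ρ_der.
near=> s; have Us : eball q r (q + s *: w) by near: s.
apply/(ρ_O _ Us); apply: lt_le_trans defining_fun_le0; near: s; exact: ρ_desc.
Unshelve. all: by end_near.
Qed.

Lemma grad_dotp_ge0 w : 0 < dotp (q - c) w -> 0 <= dotp (grad ρ q) w.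
Proof.
move=> aw; rewrite leNgt; apply/negP => /descent_into_domain Oqw.
have /filter_ex[s [s_gt0 Os]] : \forall s \near 0^'+, 0 < s /\ O (q + s *: w).
  by near=> s; split; near: s; [exact: nbhs_right_gt | exact: Oqw].
have := O_in_ball _ (subset_closure Os); rewrite addrAC -(ler_pXn2r (n := 2)) ?nnegrE //.
  rewrite enormDZ_sqr qc; have := mulr_gt0 s_gt0 aw.
  have := mulr_ge0 (sqr_ge0 s) (sqr_ge0 (enorm w)); nra.
- exact: enorm_ge0.
- by rewrite -qc enorm_ge0.
Unshelve. all: by end_near.
Qed.

Lemma grad_defining_fun : exists2 λ, 0 < λ & grad ρ q = λ *: (q - c).
Proof.
have [_ [_ [_ g_neq0]]] := ρ_def.
have a_neq0 : q - c != 0 by rewrite -enorm_gt0 qc radius_gt0.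
have [λ λ_ge0 gE] := dotp_halfspace_ge0 a_neq0 grad_dotp_ge0.
exists λ => //; rewrite lt_def λ_ge0 andbT; apply: contraNneq g_neq0 => λ0.
by rewrite gE λ0 scale0r.
Qed.

Lemma unit_normal_circumscribed :
  (enorm (grad ρ q))^-1 *: grad ρ q = Rad^-1 *: (q - c).
Proof.
have [λ λ_gt0 ->] := grad_defining_fun.
by rewrite enormZ qc gtr0_norm // scalerA invfM mulrAC mulVf ?gt_eqF // mul1r.
Qed.

Lemma exit_dotp_le0 {x v} : closure O x -> [set s | 0 < s /\ ~ O (x - s *: v)] !=set0 ->
  qpt O x v = q -> dotp (q - c) v <= 0.
Proof.
move=> xO exits_n0; rewrite /qpt; set t := tau O x v => qE.
have [t0|t_neq0] := eqVneq t 0.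
  rewrite leNgt; apply/negP => av_gt0.
  have [λ λ_gt0 gE] := grad_defining_fun.
  have : dotp (grad ρ q) (- v) < 0 by rewrite gE dotpZl dotpNr mulrN oppr_lt0 mulr_gt0.
  move=> /descent_into_domain; rewrite -qE t0 scale0r subr0.
  under eq_near do rewrite scalerN.
  by move=> /(tau_gt0 exits_n0); rewrite -/t t0 ltxx.
have t_gt0 : 0 < t by rewrite lt_def t_neq0 tau_ge0.
have := O_in_ball _ xO; rewrite -(ler_pXn2r (n := 2)) ?nnegrE ?enorm_ge0 //; last first.
  by rewrite -qc enorm_ge0.
have -> : x - c = (q - c) + t *: v by rewrite -qE addrAC subrK.
rewrite enormDZ_sqr qc => le; have := mulr_ge0 (sqr_ge0 t) (sqr_ge0 (enorm v)).
by nra.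
Qed.

End CircumscribedBall.

Theorem proposition2p8 (R : realType) (Omega : set 'rV[R]_3) (n : 'rV[R]_3 -> 'rV[R]_3)
  (Rad : R) :
  bounded_domain Omega ->
  C2_boundary Omega ->
  outward_unit_normal Omega n ->
  unif_circumscribed_sphere Omega Rad ->
  forall x v : 'rV[R]_3, closure Omega x -> v != 0 ->
    Num.sqrt (dist_bdry Omega x) <= Num.sqrt Rad * Nfun Omega n x v.
Proof.
move=> [ne_Omega [open_Omega [_ bounded_Omega]]] _ n_normal sphere_Omega x v xO v0.
have exits_n0 := exits_nonempty (x := x) bounded_Omega v0.
have q_bdry := qpt_bdry exits_n0 open_Omega xO.
set q := qpt Omega x v in q_bdry; set t := tau Omega x v.
have [c [qc Omega_in_ball]] := sphere_Omega q q_bdry.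
have [r [ρ [ρ_def nq]]] := n_normal q q_bdry.
have Rad_gt0 : 0 < Rad := radius_gt0 open_Omega Omega_in_ball ne_Omega.
have av_le0 : dotp (q - c) v <= 0 :=
  exit_dotp_le0 open_Omega Omega_in_ball ne_Omega q_bdry qc ρ_def xO exits_n0 erefl.
have nqE := unit_normal_circumscribed open_Omega Omega_in_ball ne_Omega q_bdry qc ρ_def.
set N := Nfun Omega n x v.
have NE : N = - cos_angle (q - c) v.
  by rewrite /N /Nfun -/q nq nqE dotpZl dotpZr /cos_angle qc invfM; ring.
have N_ge0 : 0 <= N.
  by rewrite NE oppr_ge0 pmulr_lle0 // invr_gt0 qc mulr_gt0 ?enorm_gt0.
have xcE : q - c + t *: v = x - c by rewrite /q /qpt -/t addrAC subrK.
have := enorm_line_lb (q - c) v t v0; rewrite -sqrrN -NE qc xcE.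
move: (dist_bdry_le open_Omega Omega_in_ball x bounded_Omega xO) => d_le lb.
rewrite -(ger0_norm N_ge0) -sqrtr_sqr -sqrtrM ?ler_sqrt; last 2 first.
- by rewrite mulr_ge0 ?sqr_ge0 // ltW.
- exact: ltW.
have : Rad - Rad * (1 - N ^+ 2) = Rad * N ^+ 2 by ring.
lra.
Qed.
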